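(* Let $E$ be a finite nonempty set and $X\in\mathcal{X}(2)\setminus\mathcal{X}^*(2)$. Then there exist a function $f:2^E\to\mathbb{N}$ with $X=\mathbb{B}_f(2)$, regular functions $C_e:\mathbb{N}\times\mathbb{N}\to\mathbb{R}_+$, $e\in E$, a vector $\vec t\in\mathbb{N}^E$ and integers $d,d'\in\mathbb{N}$ with $|d-d'|=1$ and $\mathbb{B}_f(d),\mathbb{B}_f(d')\neq\emptyset$, such that, writing $Q(\vec t,k)$ for the problem of minimizing $\sum_{e\in E}C_e(x_e;t_e)$ subject to $\vec x\in\mathbb{B}_f(k)$, there is an optimal solution $\vec x^*$ of $Q(\vec t,d)$ with $\|\vec x^*-\vec x'\|>1$ for every optimal solution $\vec x'$ of $Q(\vec t,d')$.
   Context: $\mathbb{N}=\{0,1,2,\dots\}$; $\|\cdot\|$ is the $L_1$-norm; $x(U)=\sum_{e\in U}x_e$. For $f:2^E\to\mathbb{N}$, $\mathbb{B}_f(d)=\{\vec x\in\mathbb{N}^E: x(U)\le f(U)\ \forall U\subseteq E,\ x(E)=d\}$. $f$ is strictly positive if $f(U)>0$ for all nonempty $U$, normalized if $f(\emptyset)=0$, monotonic if $f(U)\le f(V)$ for $U\subseteq V$. $\mathcal{X}(d)=\{\mathbb{B}_f(d): f \text{ strictly positive, normalized, monotonic}\}$, $\mathcal{X}^*(d)=\{\mathbb{B}_f(d): f\text{ strictly positive, normalized, monotonic, submodular}\}$. For $C:\mathbb{N}\times\mathbb{N}\to\mathbb{R}$, $C^-(x;t)=C(x;t)-C(x-1;t)$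 for $x\ge1$; $C$ is regular if $C^-(x;t)\le C^-(x;t+1)$ and $C^-(x;t+1)\le C^-(x+1;t)$ for all $x\ge1,t\in\mathbb{N}$. *)

From HB Require Import structures.
From mathcomp Require Import all_boot all_order all_algebra.
From mathcomp Require Import Rstruct.
Set Implicit Arguments. Unset Strict Implicit. Unset Printing Implicit Defensive.
Import Order.TTheory GRing.Theory Num.Theory.

(* vectors in N^E are functions E -> nat; x(U) = sum over U *)
Definition xsum (E : finType) (x : E -> nat) (U : {set E}) : nat :=
  (\sum_(e in U) x e)%N.

Definition inB (E : finType) (f : {set E} -> nat) (d : nat) (x : E -> nat) : Prop :=
  (forall U : {set E}, xsum x U <= f U)%N /\ xsum x [set: E] = d.

Definition strictly_positive (E : finType) (f : {set E} -> nat) : Prop :=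
  forall U : {set E}, U != set0 -> (0 < f U)%N.
Definition normalized (E : finType) (f : {set E} -> nat) : Prop := f set0 = 0%N.
Definition monotonic (E : finType) (f : {set E} -> nat) : Prop :=
  forall U V : {set E}, U \subset V -> (f U <= f V)%N.
Definition submodular (E : finType) (f : {set E} -> nat) : Prop :=
  forall U V : {set E}, (f (U :|: V) + f (U :&: V) <= f U + f V)%N.

Definition is_B (E : finType) (X : (E -> nat) -> Prop) (f : {set E} -> nat) (d : nat) :=
  forall x, X x <-> inB f d x.

Definition in_calX (E : finType) (d : nat) (X : (E -> nat) -> Prop) : Prop :=
  exists f, [/\ strictly_positive f, normalized f, monotonic f & is_B X f d].
Definition in_calX_star (E : finType) (d : nat) (X : (E -> nat) -> Prop) : Prop :=
  exists f, [/\ strictly_positive f, normalized f, monotonic f, submodular f & is_B X f d].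

Definition l1dist (E : finType) (x y : E -> nat) : nat :=
  (\sum_(e : E) ((x e - y e) + (y e - x e)))%nat.

Local Open Scope ring_scope.

Definition Cminus (C : nat -> nat -> Rdefinitions.R) (x t : nat) : Rdefinitions.R := C x t - C x.-1 t.

Definition regular (C : nat -> nat -> Rdefinitions.R) : Prop :=
  forall x t : nat, leq 1 x ->
    Cminus C x t <= Cminus C x t.+1 /\ Cminus C x t.+1 <= Cminus C x.+1 t.

Definition cost (E : finType) (C : E -> nat -> nat -> Rdefinitions.R) (t x : E -> nat) : Rdefinitions.R :=
  \sum_(e : E) C e (x e) (t e).

Definition optimal (E : finType) (C : E -> nat -> nat -> Rdefinitions.R) (f : {set E} -> nat)
  (t : E -> nat) (k : nat) (x : E -> nat) : Prop :=
  inB f k x /\ forall y, inB f k y -> cost C t x <= cost C t y.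

From HB Require Import structures.
From mathcomp Require Import all_boot all_order all_algebra.
From mathcomp Require Import Rstruct zify.
Import Order.TTheory GRing.Theory Num.Theory.
Set Implicit Arguments. Unset Strict Implicit. Unset Printing Implicit Defensive.

(* A set in X(2) is B_f(2) for the graph on E whose edges are the pairs {u, v}
   (loops allowed) with f {u, v} >= 2: a vector of size 2 belongs to B_f(2)
   iff its support is an edge.  If for every edge cd every other vertex b is
   adjacent to c or d, the rank U |-> [U <> 0] + [U spans an edge] is
   submodular and has the same bases, so X lies in X*(2).  Otherwise pick an
   edge cd and a vertex b adjacent to neither, and use the time-independent
   linear costs weighting b by 0, c and d by 1 and all other elements by 2.
   Every base of size 2 leaves both {b, c} and {b, d}, so costs at least 2,
   which is attained by the base on the edge cd; the base on b costs 0, so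
   every optimal base of size 1 vanishes on c and d and lies at distance 2. *)

Section Support.
Variable E : finType.
Implicit Types (x : E -> nat) (U V : {set E}) (g : {set E} -> nat).

Definition supp x : {set E} := [set e | 0 < x e].

Lemma xsumS x U V : U \subset V -> xsum x U <= xsum x V.
Proof.
move=> sUV; rewrite /xsum [X in _ <= X](big_setID U) /= (setIidPr sUV).
exact: leq_addr.
Qed.

Lemma xsum_supp x : xsum x (supp x) = xsum x [set: E].
Proof.
rewrite /xsum [RHS](big_setID (supp x)) /= setTI [X in _ + X]big1 ?addn0 //.
by move=> e; rewrite !inE lt0n negbK andbT => /eqP.
Qed.

Lemma card_supp_le x : #|supp x| <= xsum x [set: E].
Proof.
by rewrite -xsum_supp -sum1_card /xsum; apply: leq_sum => e; rewrite inE.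
Qed.

Lemma supp_set2 x : xsum x [set: E] = 2 -> exists u v, supp x = [set u; v].
Proof.
move=> x2; have := card_supp_le x; rewrite x2.
have : supp x != set0.
  by apply: contra_eqN x2 => /eqP S0; rewrite -xsum_supp S0 /xsum big_set0.
rewrite -card_gt0 => c0 c2.
have [/eqP/cards1P[u ->]|c1] := eqVneq #|supp x| 1; first by exists u, u; rewrite setUid.
have /cards2P[u [v [_ ->]]] : #|supp x| == 2 by lia.
by exists u, v.
Qed.

Lemma inB2P g x : strictly_positive g -> monotonic g ->
  inB g 2 x <-> xsum x [set: E] = 2 /\ 2 <= g (supp x).
Proof.
move=> gpos gmon; split=> [[xle x2] | [x2 gS]].
  by split=> //; rewrite -x2 -xsum_supp.
split=> // U; have [sSU | /subsetPn[e eS eU]] := boolP (supp x \subset U).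
  by rewrite (leq_trans _ (gmon _ _ sSU)) // (leq_trans _ gS) // -x2 xsumS ?subsetT.
have [->|U0] := eqVneq U set0; first by rewrite /xsum big_set0.
have : xsum x (e |: U) <= 2 by rewrite -x2 xsumS ?subsetT.
rewrite /xsum big_setU1 //=; rewrite inE in eS; have := gpos U U0; lia.
Qed.

End Support.

Section EdgeRank.
Variables (E : finType) (f : {set E} -> nat).
Implicit Types (u v w : E) (U V : {set E}).

Definition edge u v := 2 <= f [set u; v].
Definition edge_between U V := [exists u in U, exists v in V, edge u v].
Definition has_edge U := edge_between U U.
Definition edge_rank U : nat := (U != set0) + has_edge U.

Definition edges_dominate :=
  forall b c d, b != c -> b != d -> edge c d -> edge b c || edge b d.

Lemma edgeC u v : edge u v = edge v u.
Proof. by rewrite /edge setUC. Qed.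

Lemma edge_betweenP U V :
  reflect (exists u v, [/\ u \in U, v \in V & edge u v]) (edge_between U V).
Proof.
apply: (iffP existsP) => [[u /andP[uU /existsP[v /andP[vV uv]]]]|[u [v [uU vV uv]]]].
  by exists u, v.
by exists u; rewrite uU; apply/existsP; exists v; rewrite vV.
Qed.

Lemma edge_betweenS U U' V V' : U \subset U' -> V \subset V' ->
  edge_between U V -> edge_between U' V'.
Proof.
move=> sUU' sVV' /edge_betweenP[u [v [uU vV uv]]]; apply/edge_betweenP.
by exists u, v; rewrite (subsetP sUU') ?(subsetP sVV').
Qed.

Lemma has_edgeS U V : U \subset V -> has_edge U -> has_edge V.
Proof. by move=> sUV; apply: edge_betweenS. Qed.

Lemma has_edge_neq0 U : has_edge U -> U != set0.
Proof. by case/edge_betweenP=> u [_ [uU _ _]]; apply/set0Pn; exists u. Qed.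

Lemma has_edgeU U V :
  has_edge (U :|: V) = [|| has_edge U, has_edge V | edge_between U V].
Proof.
apply/edge_betweenP/or3P => [[u [v [+ + uv]]]|].
  rewrite !inE => /orP[uU|uV] /orP[vU|vV].
  - by constructor 1; apply/edge_betweenP; exists u, v.
  - by constructor 3; apply/edge_betweenP; exists u, v.
  - by constructor 3; apply/edge_betweenP; exists v, u; rewrite edgeC.
  - by constructor 2; apply/edge_betweenP; exists u, v.
by case=> /edge_betweenP[u [v [uU vV uv]]]; exists u, v; rewrite !inE ?uU ?vV ?orbT.
Qed.

Lemma edge_betweenI_dominate U V w : edges_dominate ->
  w \in U -> w \in V -> edge_between U V -> has_edge U || has_edge V.
Proof.
move=> dom wU wV /edge_betweenP[u [v [uU vV uv]]].
have has_edge_in (A : {set E}) a b : a \in A -> b \in A -> edge a b -> has_edge A.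
  by move=> aA bA ab; apply/edge_betweenP; exists a, b.
have [wu|wu] := eqVneq w u; first by rewrite (has_edge_in V u v) ?orbT // -wu.
have [wv|wv] := eqVneq w v; first by rewrite (has_edge_in U u v) // -wv.
by case/orP: (dom w u v wu wv uv) => [wu'|wv'];
  [rewrite (has_edge_in U w u) | rewrite (has_edge_in V w v) ?orbT].
Qed.

Lemma edge_rank0 : normalized edge_rank.
Proof.
rewrite /normalized /edge_rank eqxx.
by case: (boolP (has_edge set0)) => // /has_edge_neq0; rewrite eqxx.
Qed.

Lemma edge_rank_gt0 : strictly_positive edge_rank.
Proof. by move=> U; rewrite /edge_rank => ->. Qed.

Lemma edge_rank_ge2 U : (2 <= edge_rank U) = has_edge U.
Proof.
rewrite /edge_rank; have := @has_edge_neq0 U; lia.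
Qed.

Lemma edge_rank_mono : monotonic edge_rank.
Proof.
move=> U V sUV; rewrite /edge_rank.
have := @has_edgeS U V sUV; have := @has_edge_neq0 U.
have : (U != set0) -> V != set0.
  by apply: contraNN => /eqP V0; rewrite -subset0 -V0.
lia.
Qed.

Lemma edge_rank_submod : edges_dominate -> submodular edge_rank.
Proof.
move=> dom U V; rewrite /edge_rank has_edgeU.
have := @has_edgeS _ _ (subsetIl U V); have := @has_edgeS _ _ (subsetIr U V).
have := @has_edge_neq0 (U :&: V).
have : (U :|: V != set0) = (U != set0) || (V != set0) by rewrite setU_eq0 negb_and.
have : edge_between U V -> (U != set0) && (V != set0).
  case/edge_betweenP=> u [v [uU vV _]].
  by apply/andP; split; apply/set0Pn; [exists u | exists v].
have [->|/set0Pn[w]] := eqVneq (U :&: V) set0; first lia.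
rewrite inE => /andP[wU wV].
have := edge_betweenI_dominate dom wU wV.
have : U != set0 by apply/set0Pn; exists w.
have : V != set0 by apply/set0Pn; exists w.
lia.
Qed.

Lemma edges_dominate_or_witness : edges_dominate \/
  exists b c d, [/\ b != c, b != d, edge c d, ~~ edge b c & ~~ edge b d].
Proof.
case: (boolP [exists b, exists c, exists d,
    [&& b != c, b != d, edge c d & ~~ (edge b c || edge b d)]]).
  move=> /existsP[b /existsP[c /existsP[d /and4P[bc bd cd /norP[nbc nbd]]]]].
  by right; exists b, c, d.
move=> nowit; left => b c d bc bd cd; apply: contraR nowit => nbcd.
by apply/existsP; exists b; apply/existsP; exists c; apply/existsP; exists d; apply/and4P.
Qed.

Lemma has_edge_set2 u v : monotonic f -> has_edge [set u; v] = edge u v.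
Proof.
move=> fmon; apply/edge_betweenP/idP => [[a [b [aS bS ab]]]|uv].
  rewrite /edge in ab *; apply: leq_trans ab (fmon _ _ _).
  by apply/subsetP => e /set2P[]->.
by exists u, v; rewrite !inE !eqxx ?orbT.
Qed.

End EdgeRank.

Lemma inB2_edge_rank (E : finType) (f : {set E} -> nat) (x : E -> nat) :
  strictly_positive f -> monotonic f -> inB (edge_rank f) 2 x <-> inB f 2 x.
Proof.
move=> fpos fmon.
have rpos := @edge_rank_gt0 _ f; have rmon := @edge_rank_mono _ f.
split=> [/(inB2P _ rpos rmon) | /(inB2P _ fpos fmon)] [x2 Sx];
  apply/inB2P => //; split => //; have [u [v Suv]] := supp_set2 x2;
  move: Sx; rewrite Suv ?edge_rank_ge2 has_edge_set2 //.
Qed.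

Section Weights.
Variable E : finType.
Implicit Types (w x : E -> nat) (a e : E).

Definition unit_vec a e : nat := e == a.
Definition wsum w x := \sum_e w e * x e.

Lemma leq_sum1 (F : E -> nat) e : F e <= \sum_i F i.
Proof. by rewrite (bigD1 e) //= leq_addr. Qed.

Lemma leq_sum2 (F : E -> nat) e e' : e != e' -> F e + F e' <= \sum_i F i.
Proof.
by move=> ee'; rewrite (bigD1 e) //= (bigD1 e') 1?eq_sym //= addnA leq_addr.
Qed.

Lemma sum_mul_unit_vec (F : E -> nat) a : \sum_e F e * unit_vec a e = F a.
Proof.
by rewrite (bigD1 a) //= /unit_vec eqxx muln1 big1 ?addn0 // => e /negPf->; rewrite muln0.
Qed.

Lemma xsum_unit_vec a U : xsum (unit_vec a) U = (a \in U).
Proof.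
rewrite /xsum /unit_vec; case: (boolP (a \in U)) => aU.
  by rewrite (bigD1 a) //= eqxx big1 // => e /andP[_ /negPf->].
by rewrite big1 // => e eU; apply/eqP; rewrite eqb0; apply: contraNneq aU => <-.
Qed.

Lemma unit_vec_inB f a : strictly_positive f -> inB f 1 (unit_vec a).
Proof.
move=> fpos; split=> [U|]; last by rewrite xsum_unit_vec inE.
rewrite xsum_unit_vec; case: (boolP (a \in U)) => // aU.
by apply: fpos; apply/set0Pn; exists a.
Qed.

Lemma edge_inB f a a' : strictly_positive f -> monotonic f -> edge f a a' ->
  inB f 2 (fun e => unit_vec a e + unit_vec a' e).
Proof.
move=> fpos fmon aa'; apply/inB2P => //; split.
  by rewrite /xsum big_split /= -!/(xsum _ _) !xsum_unit_vec !inE.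
suff -> : supp (fun e => unit_vec a e + unit_vec a' e) = [set a; a'] by [].
by apply/setP => e; rewrite !inE /unit_vec; case: (e == a); case: (e == a').
Qed.

End Weights.

Lemma edges_dominate_calX_star (E : finType) (X : (E -> nat) -> Prop) f :
  strictly_positive f -> monotonic f -> edges_dominate f -> is_B X f 2 ->
  in_calX_star 2 X.
Proof.
move=> fpos fmon dom XB; exists (edge_rank f); split.
- exact: edge_rank_gt0.
- exact: edge_rank0.
- exact: edge_rank_mono.
- exact: edge_rank_submod.
- by move=> x; rewrite XB; apply: iff_sym; apply: inB2_edge_rank.
Qed.

Section Witness.
Variables (E : finType) (f : {set E} -> nat) (b c d : E).
Hypotheses (fpos : strictly_positive f) (fmon : monotonic f).
Hypotheses (bc : b != c) (bd : b != d) (cd : edge f c d).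
Hypotheses (nbc : ~~ edge f b c) (nbd : ~~ edge f b d).

Definition witness_weight e : nat :=
  if e == b then 0 else if (e == c) || (e == d) then 1 else 2.
Local Notation w := witness_weight.
Local Notation pair := (fun e => unit_vec c e + unit_vec d e).

Lemma witness_c_neq_d : c != d.
Proof.
apply: contraNneq nbc => cd_eq; move: cd; rewrite /edge => /leq_trans; apply; apply: fmon.
by rewrite -cd_eq setUid subsetUr.
Qed.

Lemma witness_weight_b : w b = 0.
Proof. by rewrite /w eqxx. Qed.

Lemma witness_weight_c : w c = 1.
Proof. by rewrite /w eq_sym (negPf bc) eqxx. Qed.

Lemma witness_weight_d : w d = 1.
Proof. by rewrite /w eq_sym (negPf bd) eqxx orbT. Qed.

Lemma witness_weight_out e : e != b -> e != c -> e != d -> w e = 2.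
Proof. by rewrite /w => /negPf-> /negPf-> /negPf->. Qed.

Lemma wsum_witness_pair : wsum w pair = 2.
Proof.
rewrite /wsum; under eq_bigr do rewrite mulnDr.
by rewrite big_split /= !sum_mul_unit_vec witness_weight_c witness_weight_d.
Qed.

Lemma wsum_witness_unit : wsum w (unit_vec b) = 0.
Proof. by rewrite /wsum sum_mul_unit_vec witness_weight_b. Qed.

Lemma wsum_witness_ge2 y : inB f 2 y -> 2 <= wsum w y.
Proof.
case/inB2P => // _ Sy.
have out a : ~~ edge f b a -> exists e, [/\ 0 < y e, e != b & e != a].
  move=> nba; have /subsetPn[e] : ~~ (supp y \subset [set b; a]).
    by apply: contra nba => /fmon; apply: leq_trans Sy.
  by rewrite !inE negb_or => ye /andP[eb ea]; exists e.
have heavy e : 0 < y e -> e != b -> e != c -> e != d -> 2 <= wsum w y.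
  move=> ye eb ec ed; apply: leq_trans (leq_sum1 _ e).
  by rewrite witness_weight_out // -{1}(muln1 2) leq_mul2l.
have [e1 [y1 e1b e1c]] := out c nbc.
have [e1d|] := eqVneq e1 d; last exact: heavy y1 e1b e1c.
have [e2 [y2 e2b e2d]] := out d nbd.
have [e2c|e2c] := eqVneq e2 c; last exact: heavy y2 e2b e2c e2d.
apply: leq_trans (leq_sum2 _ witness_c_neq_d).
by rewrite witness_weight_c witness_weight_d !mul1n -e1d -e2c (leq_add y2 y1).
Qed.

Lemma l1dist_witness_pair x' : wsum w x' = 0 -> 1 < l1dist pair x'.
Proof.
move/eqP; rewrite /wsum sum_nat_eq0 => /forallP x0.
have := x0 c; have := x0 d; rewrite witness_weight_c witness_weight_d !mul1n.
move=> /eqP x'd /eqP x'c; apply: leq_trans (leq_sum2 _ witness_c_neq_d).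
rewrite /unit_vec x'c x'd !eqxx (negPf witness_c_neq_d) eq_sym.
by rewrite (negPf witness_c_neq_d).
Qed.

End Witness.

Local Open Scope ring_scope.

Definition linear_cost (E : finType) (w : E -> nat) : E -> nat -> nat -> Rdefinitions.R :=
  fun e x _ => (w e * x)%:R.

Lemma linear_cost_regular (E : finType) (w : E -> nat) e : regular (linear_cost w e).
Proof.
have Cw x t : (1 <= x)%N -> Cminus (linear_cost w e) x t = (w e)%:R.
  by case: x => // x _; rewrite /Cminus /linear_cost mulnS natrD addrK.
by move=> x t x1; rewrite !Cw.
Qed.

Lemma cost_linear (E : finType) (w : E -> nat) t x :
  cost (linear_cost w) t x = (wsum w x)%:R.
Proof. by rewrite /cost /wsum natr_sum. Qed.

Unset Implicit Arguments.

Theorem theorem6p5 (E : finType) (X : (E -> nat) -> Prop) :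
  (0 < #|E|)%N ->
  in_calX 2 X -> ~ in_calX_star 2 X ->
  exists (f : {set E} -> nat) (C : E -> nat -> nat -> Rdefinitions.R) (t : E -> nat) (d d' : nat),
    [/\ is_B X f 2,
        forall e, regular (C e) /\ (forall x s, 0 <= C e x s),
        (d' = d.+1 \/ d = d'.+1),
        (exists x, inB f d x) /\ (exists x, inB f d' x) &
        exists xs, optimal C f t d xs /\
          forall x', optimal C f t d' x' -> (1 < l1dist xs x')%N].
Proof.
move=> _ [f [fpos _ fmon XB]] notstar.
have [dom|[b [c [d [bc bd cd nbc nbd]]]]] := edges_dominate_or_witness f.
  by case: notstar; apply: edges_dominate_calX_star dom XB.
pose pair e := (unit_vec c e + unit_vec d e)%N.
have pairB : inB f 2 pair by apply: edge_inB.
have unitB : inB f 1 (unit_vec b) by apply: unit_vec_inB.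
exists f, (linear_cost (witness_weight b c d)), (fun _ => 0%N), 2%N, 1%N; split=> //.
- by move=> e; split=> [|x s]; [apply: linear_cost_regular | apply: ler0n].
- by right.
- by split; [exists pair | exists (unit_vec b)].
exists pair; split.
  split=> // y yB; rewrite !cost_linear ler_nat wsum_witness_pair //.
  exact: wsum_witness_ge2 yB.
move=> x' [_ opt]; apply: (l1dist_witness_pair fmon bc bd cd nbc); apply/eqP.
by move: (opt _ unitB); rewrite !cost_linear wsum_witness_unit ler_nat leqn0.
Qed.
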